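(* Let $\mathfrak s_{nc}$ be a real semisimple Lie algebra without compact ideals, with Cartan involution $\Theta$, maximal abelian subspace $\mathfrak a$ of the $(-1)$-eigenspace of $\Theta$, restricted root space decomposition $\mathfrak s_{nc}=\mathfrak s_-\oplus\mathfrak a\oplus\mathfrak m\oplus\mathfrak s_+$ (where $\mathfrak m$ is the centralizer of $\mathfrak a$ in the fixed-point set of $\Theta$, $\mathfrak s_+$ the sum of positive root spaces and $\mathfrak s_-$ the sum of negative root spaces, for some choice of positivity). Let $\pi:\mathfrak s_{nc}\to\mathfrak{gl}(V)$ be a finite-dimensional real linear representation. Then the linear span of $\{\pi(X)v : X\in\mathfrak s_{nc},\ v\in V\}$ equals the linear span of $\{\pi(X)v : X\in\mathfrak a\oplus\mathfrak m\oplus\mathfrak s_+,\ v\in V\}$. *)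

(* A finite-dimensional real Lie algebra is modelled as
   'rV[R]_n equipped with a bracket; subspaces are predicates closed under
   linear combinations; a representation acts on column vectors 'cV[R]_m. *)
From mathcomp Require Import all_boot all_order all_algebra.
From mathcomp Require Import reals.
Set Implicit Arguments. Unset Strict Implicit. Unset Printing Implicit Defensive.
Import GRing.Theory Num.Theory.
Local Open Scope ring_scope.

Section LieDefs.
Variable R : realType.

Definition lspan (V : lmodType R) (S : V -> Prop) : V -> Prop :=
  fun u => exists k (c : 'I_k -> R) (w : 'I_k -> V),
    (forall i, S (w i)) /\ u = \sum_(i < k) c i *: w i.

Definition subspace (V : lmodType R) (S : V -> Prop) : Prop :=
  S 0 /\ forall (a : R) x y, S x -> S y -> S (a *: x + y).

Variable n : nat.
Notation L := 'rV[R]_n.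

Definition is_lie_bracket (br : L -> L -> L) : Prop :=
  [/\ forall (a : R) x y z, br (a *: x + y) z = a *: br x z + br y z,
      forall (a : R) x y z, br z (a *: x + y) = a *: br z x + br z y,
      forall x, br x x = 0 &
      forall x y z, br x (br y z) + br y (br z x) + br z (br x y) = 0].

(* matrix of ad x acting on row vectors: v *m ad_mx br x = br x v *)
Definition ad_mx (br : L -> L -> L) (x : L) : 'M[R]_n :=
  \matrix_(i, j) (br x (delta_mx 0 i)) 0 j.

Definition killing (br : L -> L -> L) (x y : L) : R :=
  \tr (ad_mx br x *m ad_mx br y).

Definition ideal (br : L -> L -> L) (I : L -> Prop) : Prop :=
  subspace I /\ forall x y, I y -> I (br x y).

(* I is solvable: some chain I = C_0, C_1, ..., C_k = 0 of subspaces with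
   [C_j, C_j] contained in C_(j+1) (equivalently, the derived series of I
   reaches 0). *)
Definition solvable_sub (br : L -> L -> L) (I : L -> Prop) : Prop :=
  exists k (C : nat -> L -> Prop),
    [/\ forall j, subspace (C j),
        forall x, C 0%N x <-> I x,
        forall j x y, C j x -> C j y -> C j.+1 (br x y) &
        forall x, C k x -> x = 0].

Definition semisimple (br : L -> L -> L) : Prop :=
  forall I, ideal br I -> solvable_sub br I -> forall x, I x -> x = 0.

Definition bform (Q : 'M[R]_n) (x y : L) : R := (x *m Q *m y^T) 0 0.

Definition compact_ideal (br : L -> L -> L) (I : L -> Prop) : Prop :=
  ideal br I /\ (exists x, I x /\ x != 0) /\
  exists Q : 'M[R]_n,
    [/\ forall x y, I x -> I y -> bform Q x y = bform Q y x,
        forall x, I x -> x != 0 -> 0 < bform Q x x &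
        forall z x y, I z -> I x -> I y ->
          bform Q (br z x) y + bform Q x (br z y) = 0].

Definition no_compact_ideals (br : L -> L -> L) : Prop :=
  forall I, ~ compact_ideal br I.

Definition cartan_involution (br : L -> L -> L) (Th : 'M[R]_n) : Prop :=
  [/\ Th *m Th = 1%:M,
      forall x y, br (x *m Th) (y *m Th) = br x y *m Th &
      forall x, x != 0 -> 0 < - killing br x (x *m Th)].

Definition pspace (Th : 'M[R]_n) (x : L) : Prop := x *m Th = - x.

Definition abelian_sub (br : L -> L -> L) (A : L -> Prop) : Prop :=
  forall x y, A x -> A y -> br x y = 0.

Definition max_abelian_in_p (br : L -> L -> L) (Th : 'M[R]_n)
    (A : L -> Prop) : Prop :=
  [/\ subspace A, forall x, A x -> pspace Th x, abelian_sub br A &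
      forall A', subspace A' -> (forall x, A' x -> pspace Th x) ->
        abelian_sub br A' -> (forall x, A x -> A' x) -> forall x, A' x -> A x].

Definition mspace (br : L -> L -> L) (Th : 'M[R]_n) (A : L -> Prop) (x : L)
  : Prop := x *m Th = x /\ forall h, A h -> br h x = 0.

(* a linear functional on L, lam(h) = (h *m lam) 0 0; only its restriction
   to a matters *)
Definition fval (lam : 'cV[R]_n) (h : L) : R := (h *m lam) 0 0.

Definition root_vec (br : L -> L -> L) (A : L -> Prop) (lam : 'cV[R]_n)
  (x : L) : Prop := forall h, A h -> br h x = fval lam h *: x.

Definition is_root (br : L -> L -> L) (A : L -> Prop) (lam : 'cV[R]_n)
  : Prop := (exists h, A h /\ fval lam h != 0) /\
            (exists x, x != 0 /\ root_vec br A lam x).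

(* positivity chosen by a regular element H0 of a *)
Definition regular_elt (br : L -> L -> L) (A : L -> Prop) (H0 : L) : Prop :=
  A H0 /\ forall lam, is_root br A lam -> fval lam H0 != 0.

Definition s_plus (br : L -> L -> L) (A : L -> Prop) (H0 : L) : L -> Prop :=
  lspan (fun x => exists lam, [/\ is_root br A lam, 0 < fval lam H0 &
                                   root_vec br A lam x]).

Definition ams_plus (br : L -> L -> L) (Th : 'M[R]_n) (A : L -> Prop)
  (H0 : L) (x : L) : Prop :=
  exists h y z, [/\ A h, mspace br Th A y, s_plus br A H0 z & x = h + y + z].

Definition is_lie_rep (m : nat) (br : L -> L -> L) (pi : L -> 'M[R]_m)
  : Prop :=
  (forall (a : R) x y, pi (a *: x + y) = a *: pi x + pi y) /\
  (forall x y, pi (br x y) = pi x *m pi y - pi y *m pi x).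

End LieDefs.

(* Let W be the span of the images of pi(X), X in a + m + s_+.  The operators
   ad h, h in a, commute and are self-adjoint for the inner product
   B(x, y) = - K(x, Theta y), so L has a basis of joint eigenvectors of ad a;
   it suffices to show im pi(x) <= W for such an x, of weight lam.  If lam
   vanishes on a, x centralizes a, and (x - Theta x)/2 lies in a by
   maximality while (x + Theta x)/2 lies in m.  If lam(H0) > 0, x lies in
   s_+.  If lam(H0) < 0, then E = pi(Theta x), F = pi(x) and
   H = pi([Theta x, x]) satisfy [E, F] = H and [H, F] = c F with
   c = lam([Theta x, x]) <> 0.  Such an F is nilpotent, and the commutator
   of E with F^(k+1) expresses F^k through E F^(k+1), F^(k+1) E and H F^k;
   as im E and im H lie in W, descending from F^N = 0 gives im F <= W.
   Self-adjoint operators are diagonalizable because a factor (X - a)^2 + b^2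
   or (X - a)^2 of their minimal polynomial contradicts positivity. *)

From mathcomp Require Import all_boot all_order all_algebra.
From mathcomp Require Import reals complex.
From mathcomp Require Import ring lra zify.
From mathcomp Require Import boolp.
Set Implicit Arguments. Unset Strict Implicit. Unset Printing Implicit Defensive.
Import Order.TTheory GRing.Theory Num.Theory.
Local Open Scope ring_scope.

Section Span.
Variables (R : realType) (V : lmodType R).
Implicit Types (S W : V -> Prop).

Lemma subspace0 W : subspace W -> W 0.
Proof. by case. Qed.

Lemma subspaceZ W a x : subspace W -> W x -> W (a *: x).
Proof. by move=> [W0 Wlin] Wx; rewrite -[_ *: _]addr0; apply: Wlin. Qed.

Lemma subspaceD W x y : subspace W -> W x -> W y -> W (x + y).
Proof. by move=> [_ Wlin] Wx Wy; rewrite -[x]scale1r; apply: Wlin. Qed.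

Lemma subspaceB W x y : subspace W -> W x -> W y -> W (x - y).
Proof. by move=> sW Wx Wy; rewrite -scaleN1r; apply: subspaceD (subspaceZ _ _ _). Qed.

Lemma subspace_sum W k (c : 'I_k -> R) (w : 'I_k -> V) :
  subspace W -> (forall i, W (w i)) -> W (\sum_(i < k) c i *: w i).
Proof.
move=> sW Ww; elim/big_ind: _ => [|x y|i _]; [exact: subspace0 | exact: subspaceD |].
exact: subspaceZ.
Qed.

Lemma lspan_subspace S : subspace (lspan S).
Proof.
split; first by exists 0%N, (fun=> 0), (fun=> 0); split => [[]|]; rewrite ?big_ord0.
move=> a _ _ [k1 [c1 [w1 [Sw1 ->]]]] [k2 [c2 [w2 [Sw2 ->]]]].
pose join T (f1 : 'I_k1 -> T) (f2 : 'I_k2 -> T) i :=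
  match split i with inl i1 => f1 i1 | inr i2 => f2 i2 end.
exists (k1 + k2)%N, (join _ (fun i => a * c1 i) c2), (join _ w1 w2); split.
  by move=> i; rewrite /join; case: (split i).
rewrite big_split_ord scaler_sumr /join; congr (_ + _); apply: eq_bigr => i _.
  by rewrite (unsplitK (inl _ i)) scalerA.
by rewrite (unsplitK (inr _ i)).
Qed.

Lemma lspan_gen S x : S x -> lspan S x.
Proof. by exists 1%N, (fun=> 1), (fun=> x); rewrite big_ord1 scale1r. Qed.

Lemma lspan_min S W : subspace W -> (forall x, S x -> W x) -> forall x, lspan S x -> W x.
Proof. by move=> sW SW _ [k [c [w [Sw ->]]]]; apply: subspace_sum => // i; apply: SW. Qed.
End Span.

Section RealPolynomialFactors.
Variable R : rcfType.

Definition quad_poly (a b : R) : {poly R} := ('X - a%:P) ^+ 2 + (b ^+ 2)%:P.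

Lemma size_quad_poly a b : size (quad_poly a b) = 3%N.
Proof.
by rewrite size_polyDl size_exp_XsubC // (leq_ltn_trans (size_polyC_leq1 _)).
Qed.

(* A non-real root [a + i b] of [d] and its conjugate give the factor [quad_poly a b]. *)
Lemma root_or_quad_poly_dvdp (d : {poly R}) : size d != 1%N ->
  (exists a, root d a) \/ exists a b, b != 0 /\ quad_poly a b %| d.
Proof.
move=> sd1; pose dC := map_poly (real_complex R) d.
have [[a b] rz] : exists z, root dC z by apply/closed_rootP; rewrite size_map_poly.
have [b0|b0] := eqVneq b 0.
  by left; exists a; rewrite -(fmorph_root (real_complex R)); move: rz; rewrite b0.
right; exists a, b; split=> //.
have dCJ : map_poly conjc dC = dC.
  by rewrite -map_poly_comp; apply: eq_map_poly => x /=; rewrite oppr0.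
have rzJ : root dC (a +i* b)^*%C by rewrite -complex_root_conj dCJ.
rewrite -(dvdp_map (real_complex R)) -/dC.
have [||q ->] := @uniq_roots_prod_XsubC _ dC [:: (a +i* b)%C; (a +i* b)^*%C].
- by rewrite /= rz rzJ.
- rewrite uniq_rootsE /= inE andbT; apply/eqP => -[/eqP].
  by rewrite -subr_eq0 opprK -mulr2n mulrn_eq0 (negPf b0).
apply: dvdp_mull.
have zJ : (a +i* b)^*%C = a%:C%C - 'i%C * b%:C%C.
  by rewrite [LHS]complexE /= rmorphN mulrN.
rewrite !big_cons big_nil mulr1 zJ (complexE (a +i* b)%C) /=.
rewrite /quad_poly rmorphD rmorphXn rmorphB /= map_polyX !map_polyC /= rmorphXn /=.
have i2 : ('i%C)%:P ^+ 2 = - 1 :> {poly R[i]}.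
  by rewrite -polyC_exp sqr_i polyCN.
rewrite !(polyCD, polyCN, polyCM, polyC_exp).
set I := ('i%C)%:P; set A := (a%:C%C)%:P; set B := (b%:C%C)%:P.
have -> : ('X - (A + I * B)) * ('X - (A + - (I * B))) = ('X - A) ^+ 2 - I ^+ 2 * (B * B).
  by ring.
by rewrite i2 mulN1r opprK.
Qed.

Lemma split_uniq_of_no_square_factor (p : {poly R}) : p != 0 ->
  (forall a b, b != 0 -> ~~ (quad_poly a b %| p)) ->
  (forall a, ~~ (('X - a%:P) ^+ 2 %| p)) ->
  exists2 rs, uniq rs & p %= \prod_(r <- rs) ('X - r%:P).
Proof.
move=> p0 noquad nosq; suff: forall k (d : {poly R}), (size d < k)%N -> d %| p ->
    exists2 rs, uniq rs & d %= \prod_(r <- rs) ('X - r%:P).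
  by move=> /(_ (size p).+1 p (ltnSn _) (dvdpp p)).
elim=> // k IH d; rewrite ltnS => sdk dp.
have [/eqP d1|sd1] := eqVneq (size d) 1%N.
  by exists [::]; rewrite // big_nil -size_poly_eq1.
have [[a rda]|[a [b [b0 qd]]]] := root_or_quad_poly_dvdp sd1; last first.
  by case/negP: (noquad a b b0); apply: dvdp_trans dp.
have d0 : d != 0 by apply: contraTneq dp => ->; rewrite dvd0p.
have dE : d %/ ('X - a%:P) * ('X - a%:P) = d by rewrite divpK // dvdp_XsubCl.
set d1 := d %/ _ in dE.
have d10 : d1 != 0 by apply: contraNneq d0 => d10; rewrite -dE d10 mul0r.
have sd1k : (size d1 < k)%N.
  by move: sdk; rewrite -dE size_mul ?polyXsubC_eq0 // size_XsubC addn2.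
have [|rs urs d1E] := IH d1 sd1k.
  by apply: dvdp_trans dp; rewrite -dE dvdp_mulr.
have ars : a \notin rs.
  apply: contra (nosq a) => ars; apply: dvdp_trans dp.
  rewrite -dE expr2 dvdp_mul2r ?polyXsubC_eq0 // (eqp_dvdr _ d1E).
  by rewrite -root_factor_theorem root_prod_XsubC.
by exists (a :: rs); rewrite /= ?ars // big_cons -dE mulrC eqp_mull.
Qed.

End RealPolynomialFactors.

Lemma mxminpoly_cofactor_neq0 (F : fieldType) n (T : 'M[F]_n.+1) (q : {poly F}) :
  q %| mxminpoly T -> (1 < size q)%N ->
  exists u : 'rV_n.+1, u *m horner_mx T (mxminpoly T %/ q) != 0.
Proof.
move=> qT sq; have pT0 := monic_neq0 (mxminpoly_monic T).
set s := mxminpoly T %/ q.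
have s0 : s != 0 by apply: contraNneq pT0 => s0; rewrite -(divpK qT) -/s s0 mul0r.
have ssp : (size s < size (mxminpoly T))%N.
  have q0 : q != 0 by rewrite -size_poly_gt0 ltnW.
  by rewrite size_divp // ltn_subrL -subn1 subn_gt0 sq size_poly_gt0.
have [i|/(_ _)/negbFE/eqP sT0] := pickP (fun i => row i (horner_mx T s) != 0).
  by exists (delta_mx 0 i); rewrite -rowE.
have /dvdp_leq : mxminpoly T %| s.
  by apply: mxminpoly_min; apply/row_matrixP => i; rewrite sT0 row0.
by rewrite s0 leqNgt ssp => /(_ isT).
Qed.


Lemma horner_mx_cofactor (F : fieldType) n (T : 'M[F]_n.+1) (q : {poly F}) :
  q %| mxminpoly T -> horner_mx T (mxminpoly T %/ q) *m horner_mx T q = 0.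
Proof. by move=> qT; rewrite mulmxE -rmorphM divpK //; apply: mx_root_minpoly. Qed.

Lemma horner_mx_XsubC (F : fieldType) n (T : 'M[F]_n.+1) a :
  horner_mx T ('X - a%:P) = T - a%:M.
Proof. by rewrite rmorphB /= horner_mx_X horner_mx_C. Qed.

Lemma horner_mx_quad_poly (R : rcfType) n (T : 'M[R]_n.+1) a b :
  horner_mx T (quad_poly a b) = (T - a%:M) *m (T - a%:M) + (b ^+ 2)%:M.
Proof. by rewrite rmorphD /= horner_mx_C rmorphXn /= horner_mx_XsubC expr2 mulmxE. Qed.

Section SelfAdjoint.
Variables (R : rcfType) (n : nat) (T : 'M[R]_n.+1).
Variable form : 'rV[R]_n.+1 -> 'rV[R]_n.+1 -> R.
Hypothesis form_linear : forall a x y z, form (a *: x + y) z = a * form x z + form y z.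
Hypothesis formC : forall x y, form x y = form y x.
Hypothesis form_gt0 : forall x, x != 0 -> 0 < form x x.
Hypothesis form_adj : forall x y, form (x *m T) y = form x (y *m T).

Let form0l z : form 0 z = 0.
Proof. by have := form_linear 1 0 0 z; rewrite scaler0 addr0 mul1r => ?; lra. Qed.

Let formDl x y z : form (x + y) z = form x z + form y z.
Proof. by rewrite -[x]scale1r form_linear mul1r scale1r. Qed.

Let formZl a x z : form (a *: x) z = a * form x z.
Proof. by rewrite -[a *: x]addr0 form_linear form0l addr0. Qed.

Let form_ge0 x : 0 <= form x x.
Proof. by have [->|/form_gt0/ltW//] := eqVneq x 0; rewrite form0l. Qed.

Let form_adj_shift a x y :
  form (x *m (T - a%:M)) y = form x (y *m (T - a%:M)).
Proof.
rewrite !mulmxBr !mul_mx_scalar -!scaleNr formDl formZl [RHS]formC formDl formZl.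
by rewrite form_adj (formC (y *m T)) (formC y).
Qed.

Lemma selfadjoint_no_quad_factor a b : b != 0 -> ~~ (quad_poly a b %| mxminpoly T).
Proof.
move=> b0; apply/negP => qT.
have [|u] := mxminpoly_cofactor_neq0 qT; first by rewrite size_quad_poly.
set w := u *m _ => w0; have := horner_mx_cofactor qT.
rewrite horner_mx_quad_poly => /(congr1 (mulmx u)).
rewrite mulmxA -/w mulmx0 mulmxDr mul_mx_scalar mulmxA => wq0.
have : form (w *m (T - a%:M) *m (T - a%:M) + b ^+ 2 *: w) w = 0 by rewrite wq0 form0l.
rewrite formDl formZl form_adj_shift; apply/eqP; rewrite gt_eqF //.
by apply: ltr_wpDl; [exact: form_ge0 | rewrite mulr_gt0 ?exprn_even_gt0 ?form_gt0].
Qed.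

Lemma selfadjoint_no_square_factor a : ~~ (('X - a%:P) ^+ 2 %| mxminpoly T).
Proof.
apply/negP => sqT; have qT : 'X - a%:P %| mxminpoly T.
  by apply: dvdp_trans sqT; rewrite expr2 dvdp_mulIl.
have [|u] := mxminpoly_cofactor_neq0 qT; first by rewrite size_XsubC.
set w := u *m _ => w0; have := horner_mx_cofactor qT.
rewrite horner_mx_XsubC => /(congr1 (mulmx u)); rewrite mulmxA -/w mulmx0 => wT0.
have cofE : mxminpoly T %/ ('X - a%:P) = mxminpoly T %/ ('X - a%:P) ^+ 2 * ('X - a%:P).
  by rewrite -{1}(divpK sqT) expr2 mulrA mulpK ?polyXsubC_eq0.
have wE : w = u *m horner_mx T (mxminpoly T %/ ('X - a%:P) ^+ 2) *m (T - a%:M).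
  by rewrite /w cofE rmorphM /= horner_mx_XsubC -mulmxE mulmxA.
have : form w w = 0 by rewrite {1}wE form_adj_shift wT0 formC form0l.
by apply/eqP; rewrite gt_eqF ?form_gt0.
Qed.
Lemma selfadjoint_mxminpoly_split :
  exists2 rs, uniq rs & mxminpoly T %= \prod_(r <- rs) ('X - r%:P).
Proof.
apply: split_uniq_of_no_square_factor (monic_neq0 (mxminpoly_monic T)) _ _.
  exact: selfadjoint_no_quad_factor.
exact: selfadjoint_no_square_factor.
Qed.

End SelfAdjoint.

Lemma selfadjoint_diagonalizable (R : rcfType) n (T : 'M[R]_n)
    (form : 'rV[R]_n -> 'rV[R]_n -> R) :
  (forall a x y z, form (a *: x + y) z = a * form x z + form y z) ->
  (forall x y, form x y = form y x) -> (forall x, x != 0 -> 0 < form x x) ->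
  (forall x y, form (x *m T) y = form x (y *m T)) -> diagonalizable T.
Proof.
case: n T form => [|n] T form form_linear formC form_gt0 form_adj.
  by exists 1%:M; rewrite ?unitmx1 //; apply/is_diag_mxP => -[].
apply/diagonalizableP.
have [rs urs pE] := selfadjoint_mxminpoly_split form_linear formC form_gt0 form_adj.
by exists rs; rewrite // (eqp_dvdl _ pE).
Qed.

Lemma commutatorMr (A : pzRingType) (x y z : A) :
  x * (y * z) - y * z * x = (x * y - y * x) * z + y * (x * z - z * x).
Proof. by rewrite mulrBl mulrBr !mulrA addrA subrK. Qed.

Section NilpotentOfCommutator.
Variables (R : numFieldType) (m : nat) (F H : 'M[R]_m.+1) (c : R).
Hypothesis c0 : c != 0.
Hypothesis HF : H * F - F * H = c *: F.

Let Fq_comm q : horner_mx F q * F = F * horner_mx F q.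
Proof. by rewrite -!mulmxE; apply: comm_horner_mx. Qed.

Let commutator_horner q :
  H * horner_mx F q - horner_mx F q * H = c *: (F * horner_mx F q^`()).
Proof.
elim/poly_ind: q => [|q a IH].
  by rewrite rmorph0 deriv0 rmorph0 !(mulr0, mul0r) subrr scaler0.
rewrite derivMXaddC !rmorphD !rmorphM /= !horner_mx_X !horner_mx_C.
have Ha : H * a%:M = a%:M * H by rewrite -!mulmxE scalar_mxC.
rewrite mulrDr mulrDl Ha opprD addrACA subrr addr0 commutatorMr IH HF.
by rewrite mulrDr -scalerAl -scalerAr -scalerDr -mulrA -!Fq_comm addrC.
Qed.

Lemma nilpotent_of_commutator_scaled : F ^+ (size (mxminpoly F)).-1 = 0.
Proof.
set p := mxminpoly F; set d := (size p).-1.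
have sp : size p = d.+1.
  by rewrite /d prednK // size_poly_gt0 monic_neq0 ?mxminpoly_monic.
have Xp'F : horner_mx F ('X * p^`()) = 0.
  have := commutator_horner p; rewrite mx_root_minpoly mulr0 mul0r subrr.
  move/esym/eqP; rewrite scaler_eq0 (negPf c0) /= => /eqP.
  by rewrite rmorphM /= horner_mx_X.
pose r := 'X * p^`() - d%:R *: p.
have coef_r i : r`_i = (i%:R - d%:R) * p`_i.
  rewrite /r coefB coefZ coefXM coef_deriv mulrBl.
  case: i => [|i] /=; first by rewrite mul0r sub0r.
  by rewrite [i.+1%:R * _]mulr_natl.
have r0 : r = 0.
  apply/eqP; apply: contraT => r_neq0.
  have /(dvdp_leq r_neq0) : p %| r.
    by apply: mxminpoly_min; rewrite rmorphB /= Xp'F linearZ /= mx_root_minpoly scaler0 subrr.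
  rewrite sp ltnNge => /negbTE <-; apply/leq_sizeP => j dj.
  have [->|ne] := eqVneq j d; first by rewrite coef_r subrr mul0r.
  by rewrite coef_r nth_default ?mulr0 // sp ltn_neqAle eq_sym ne.
have pE : p = 'X^d.
  apply/polyP => i; rewrite coefXn.
  have /eqP := coef_r i; rewrite r0 coef0 eq_sym mulf_eq0 subr_eq0 eqr_nat.
  have [->|ne] := eqVneq i d; last by move=> /eqP.
  by have := mxminpoly_monic F; rewrite monicE /lead_coef -/p sp => /eqP.
by have := mx_root_minpoly F; rewrite -/p pE rmorphXn /= horner_mx_X.
Qed.

End NilpotentOfCommutator.

Section Sl2Triple.
Variables (R : realType) (m : nat) (E F H : 'M[R]_m.+1) (c : R).
Hypotheses (c0 : c != 0) (EF : E * F - F * E = H) (HF : H * F - F * H = c *: F).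
Variable W : 'cV[R]_m.+1 -> Prop.
Hypotheses (W_sub : subspace W) (W_E : forall u, W (E *m u)) (W_H : forall u, W (H *m u)).

Let HF_swap : H * F = F * H + c *: F.
Proof. by rewrite -HF addrC subrK. Qed.

Lemma commutator_H_Fpow k : H * F ^+ k - F ^+ k * H = (k%:R * c) *: F ^+ k.
Proof.
elim: k => [|k IH]; first by rewrite !expr0 mulr1 mul1r subrr mul0r scale0r.
rewrite exprSr commutatorMr IH HF -scalerAl -scalerAr -exprSr -scalerDl.
by rewrite mulrSr mulrDl mul1r.
Qed.

Lemma commutator_E_Fpow k : E * F ^+ k.+1 - F ^+ k.+1 * E =
  k.+1%:R *: (F ^+ k * H) + (c * 'C(k.+1, 2)%:R) *: F ^+ k.
Proof.
elim: k => [|k IH]; first by rewrite expr1 EF expr0 mul1r bin_small // mulr0 scale0r addr0 scale1r.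
rewrite [F ^+ k.+2]exprSr commutatorMr IH EF mulrDl -!scalerAl -mulrA HF_swap.
rewrite mulrDr mulrA -exprSr -scalerAr -exprSr scalerDr scalerA -!addrA.
set X := F ^+ k.+1 * H; set Y := F ^+ k.+1.
have -> : (c * 'C(k.+2, 2)%:R) *: Y = (c * 'C(k.+1, 2)%:R) *: Y + (k.+1%:R * c) *: Y.
  by rewrite binS bin1 natrD mulrDr scalerDl (mulrC c k.+1%:R).
have -> : k.+2%:R *: X = k.+1%:R *: X + X by rewrite mulrSr scalerDl scale1r.
by rewrite -addrA; congr (_ + _); rewrite addrC addrA (addrC X).
Qed.

Let sl2_imageSpow k : (0 < k)%N ->
  (forall u, W (F ^+ k.+1 *m u)) -> forall u, W (F ^+ k *m u).
Proof.
move=> k0 WFk1 u; set g := c * 'C(k.+1, 2)%:R.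
have g0 : g != 0 by rewrite mulf_neq0 // pnatr_eq0 -lt0n bin_gt0.
have HFk : H * F ^+ k = F ^+ k * H + (k%:R * c) *: F ^+ k.
  by rewrite -commutator_H_Fpow addrC subrK.
have gFk : g *: F ^+ k = k.+1%:R *: (H * F ^+ k) - (E * F ^+ k.+1 - F ^+ k.+1 * E).
  rewrite commutator_E_Fpow HFk scalerDr scalerA opprD addrACA subrr add0r -scalerBl.
  have k2 : (k.+1 * k = 2 * 'C(k.+1, 2))%N by rewrite -(mul_bin_diag k.+1 1) bin1.
  by rewrite mulrA -natrM k2 natrM /g; congr (_ *: _); ring.
have -> : F ^+ k *m u = g^-1 *: (g *: F ^+ k *m u) by rewrite -scalemxAl scalerA mulVf ?scale1r.
apply: subspaceZ => //; rewrite gFk !mulmxBl -scalemxAl -!mulmxE -!mulmxA.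
by apply: subspaceB; [|apply: subspaceZ|apply: subspaceB].
Qed.

Lemma sl2_imageS u : W (F *m u).
Proof.
have := nilpotent_of_commutator_scaled c0 HF; set N := _.-1 => FN.
suff Wpow j k : (N <= j + k)%N -> (0 < k)%N -> forall u, W (F ^+ k *m u).
  by rewrite -[F]expr1; apply: (Wpow N); rewrite ?leq_addr.
elim: j k => [|j IH] k; rewrite ?add0n => Njk k0 v.
  by rewrite -(subnK Njk) exprD FN mulr0 mul0mx; apply: subspace0.
by apply: sl2_imageSpow => // w; apply: IH; rewrite // -addSnnS.
Qed.

End Sl2Triple.

Lemma sl2_image (R : realType) m (E F H : 'M[R]_m) (c : R) (W : 'cV[R]_m -> Prop) :
  c != 0 -> E *m F - F *m E = H -> H *m F - F *m H = c *: F ->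
  subspace W -> (forall u, W (E *m u)) -> (forall u, W (H *m u)) ->
  forall u, W (F *m u).
Proof.
case: m E F H W => [|m] E F H W c0 EF HF sW WE WH u.
  by rewrite flatmx0; apply: subspace0.
exact: (sl2_imageS c0 EF HF sW WE WH).
Qed.

Lemma rowspace_cover (F : fieldType) n (S : 'rV[F]_n -> Prop) :
  exists k (M : 'M[F]_(k, n)), (forall i, S (row i M)) /\ forall h, S h -> (h <= M)%MS.
Proof.
suff: forall d k (M : 'M[F]_(k, n)), (n - \rank M <= d)%N -> (forall i, S (row i M)) ->
    exists k (M : 'M[F]_(k, n)), (forall i, S (row i M)) /\ forall h, S h -> (h <= M)%MS.
  by move/(_ n 0%N 0); apply; [rewrite leq_subr | case].
elim=> [|d IH] k M dM SM.
  exists k, M; split => // h _; apply: submx_full.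
  by rewrite /row_full eqn_leq rank_leq_col -subn_eq0 -leqn0.
have [MS|/existsNP[h /not_implyP[Sh /negP hM]]] := pselect (forall h, S h -> (h <= M)%MS).
  by exists k, M.
have ltM : (\rank M < \rank (col_mx M h))%N.
  rewrite -addsmxE (ltn_leqif (mxrank_leqif_sup (addsmxSl M h))).
  by apply: contra hM => /(submx_trans (addsmxSr M h)).
apply: (IH _ (col_mx M h)) => [|i].
  by move: dM (rank_leq_col (col_mx M h)); lia.
by rewrite -(splitK i); case: (split i) => j /=; rewrite ?rowKu ?rowKd ?row_id.
Qed.

Section LieAlgebra.
Variables (R : realType) (n : nat).
Local Notation L := 'rV[R]_n.
Variable br : L -> L -> L.
Hypothesis br_lie : is_lie_bracket br.

Let br_linearl a x y z : br (a *: x + y) z = a *: br x z + br y z.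
Proof. by case: br_lie. Qed.
Let br_linearr a x y z : br z (a *: x + y) = a *: br z x + br z y.
Proof. by case: br_lie. Qed.

Lemma brxx x : br x x = 0. Proof. by case: br_lie. Qed.
Lemma br_jacobi x y z : br x (br y z) + br y (br z x) + br z (br x y) = 0.
Proof. by case: br_lie. Qed.

Lemma br0l z : br 0 z = 0.
Proof.
have := br_linearl 1 0 0 z; rewrite scaler0 addr0 scale1r => e.
by apply: (addrI (br 0 z)); rewrite addr0 -e.
Qed.
Lemma br0r z : br z 0 = 0.
Proof.
have := br_linearr 1 0 0 z; rewrite scaler0 addr0 scale1r => e.
by apply: (addrI (br z 0)); rewrite addr0 -e.
Qed.
Lemma brDl x y z : br (x + y) z = br x z + br y z.
Proof. by rewrite -[x]scale1r br_linearl !scale1r. Qed.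
Lemma brDr x y z : br z (x + y) = br z x + br z y.
Proof. by rewrite -[x]scale1r br_linearr !scale1r. Qed.
Lemma brZl a x z : br (a *: x) z = a *: br x z.
Proof. by rewrite -[a *: x]addr0 br_linearl br0l addr0. Qed.
Lemma brZr a x z : br z (a *: x) = a *: br z x.
Proof. by rewrite -[a *: x]addr0 br_linearr br0r addr0. Qed.
Lemma brNl x z : br (- x) z = - br x z.
Proof. by rewrite -scaleN1r brZl scaleN1r. Qed.
Lemma brNr x z : br z (- x) = - br z x.
Proof. by rewrite -scaleN1r brZr scaleN1r. Qed.
Lemma brBr x y z : br z (x - y) = br z x - br z y.
Proof. by rewrite brDr brNr. Qed.

Lemma br_anticomm x y : br x y = - br y x.
Proof.
apply/eqP; rewrite -addr_eq0; apply/eqP.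
by have := brxx (x + y); rewrite brDl !brDr !brxx add0r addr0.
Qed.

Lemma br_suml k (c : 'I_k -> R) (w : 'I_k -> L) z :
  br (\sum_(i < k) c i *: w i) z = \sum_(i < k) c i *: br (w i) z.
Proof. by elim/big_rec2: _ => [|i y x _ <-]; rewrite ?br0l // brDl brZl. Qed.

Lemma br_sumr k (c : 'I_k -> R) (w : 'I_k -> L) z :
  br z (\sum_(i < k) c i *: w i) = \sum_(i < k) c i *: br z (w i).
Proof. by elim/big_rec2: _ => [|i y x _ <-]; rewrite ?br0r // brDr brZr. Qed.

Lemma ad_mxE x v : v *m ad_mx br x = br x v.
Proof.
rewrite {2}(row_sum_delta v) br_sumr; apply/rowP => j.
by rewrite !mxE summxE; apply: eq_bigr => i _; rewrite !mxE.
Qed.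

Let row_mx_ext (M N : 'M[R]_n) : (forall v : L, v *m M = v *m N) -> M = N.
Proof. by move=> MN; apply/row_matrixP => i; rewrite !rowE MN. Qed.

Lemma ad_mx_linear a x y : ad_mx br (a *: x + y) = a *: ad_mx br x + ad_mx br y.
Proof. by apply: row_mx_ext => v; rewrite mulmxDr -scalemxAr !ad_mxE br_linearl. Qed.

Lemma ad_mx_br x y :
  ad_mx br (br x y) = ad_mx br y *m ad_mx br x - ad_mx br x *m ad_mx br y.
Proof.
apply: row_mx_ext => v; rewrite mulmxBr !mulmxA !ad_mxE.
rewrite (br_anticomm (br x y)) (br_anticomm x v) brNr opprK.
by apply/eqP; rewrite eqr_oppLR -addr_eq0 addrA br_jacobi.
Qed.

Local Notation K := (killing br).

Lemma killingC x y : K x y = K y x.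
Proof. exact: mxtrace_mulC. Qed.

Lemma killing_linearl a x y z : K (a *: x + y) z = a * K x z + K y z.
Proof. by rewrite /killing ad_mx_linear mulmxDl -scalemxAl mxtraceD mxtraceZ. Qed.

Lemma killing0l z : K 0 z = 0.
Proof. by have := killing_linearl 1 0 0 z; rewrite scaler0 addr0 mul1r => ?; lra. Qed.

Lemma killingZl a x z : K (a *: x) z = a * K x z.
Proof. by rewrite -[a *: x]addr0 killing_linearl killing0l addr0. Qed.

Lemma killingNl x z : K (- x) z = - K x z.
Proof. by rewrite -scaleN1r killingZl mulN1r. Qed.

Lemma killing_invariant x y z : K (br x y) z = K x (br y z).
Proof.
rewrite /killing !ad_mx_br mulmxBl mulmxBr !linearB /=; congr (_ - _).
  by rewrite -mulmxA mxtrace_mulC mulmxA.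
by rewrite mulmxA.
Qed.

Variable Th : 'M[R]_n.
Hypothesis Th_cartan : cartan_involution br Th.

Lemma cartan_sqr : Th *m Th = 1%:M.
Proof. by case: Th_cartan. Qed.

Lemma cartanK m (x : 'M[R]_(m, n)) : x *m Th *m Th = x.
Proof. by rewrite -mulmxA cartan_sqr mulmx1. Qed.

Lemma br_cartan x y : br (x *m Th) (y *m Th) = br x y *m Th.
Proof. by case: Th_cartan. Qed.

Lemma ad_mx_cartan x : ad_mx br (x *m Th) = Th *m ad_mx br x *m Th.
Proof. by apply: row_mx_ext => v; rewrite !mulmxA !ad_mxE -br_cartan cartanK. Qed.

Lemma killing_cartan x y : K (x *m Th) (y *m Th) = K x y.
Proof.
rewrite /killing !ad_mx_cartan !mulmxA -(mulmxA _ Th Th) cartan_sqr mulmx1.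
by rewrite -!mulmxA mxtrace_mulC !mulmxA cartanK.
Qed.

Definition cartan_form x y := - K x (y *m Th).

Lemma cartan_formC x y : cartan_form x y = cartan_form y x.
Proof. by rewrite /cartan_form -killing_cartan cartanK killingC. Qed.

Lemma cartan_form_linearl a x y z :
  cartan_form (a *: x + y) z = a * cartan_form x z + cartan_form y z.
Proof. by rewrite /cartan_form killing_linearl opprD mulrN. Qed.

Lemma cartan_form_gt0 x : x != 0 -> 0 < cartan_form x x.
Proof. by case: Th_cartan => _ _; apply. Qed.

Lemma br_pspace_cartan h x : pspace Th h -> br h (x *m Th) = - (br h x *m Th).
Proof. by move=> hTh; rewrite -br_cartan hTh brNl opprK. Qed.

Lemma cartan_form_ad_pspace h x y : pspace Th h ->
  cartan_form (br h x) y = cartan_form x (br h y).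
Proof.
move=> hTh; rewrite /cartan_form br_anticomm killingNl killing_invariant.
by rewrite br_pspace_cartan // killingC killingNl killingC opprK.
Qed.

Lemma ad_pspace_diagonalizable h : pspace Th h -> diagonalizable (ad_mx br h).
Proof.
move=> hTh; apply: (@selfadjoint_diagonalizable _ _ _ cartan_form).
- exact: cartan_form_linearl.
- exact: cartan_formC.
- exact: cartan_form_gt0.
- by move=> x y; rewrite !ad_mxE; apply: cartan_form_ad_pspace.
Qed.

Variable A : L -> Prop.
Hypothesis A_max : max_abelian_in_p br Th A.

Lemma A_subspace : subspace A. Proof. by case: A_max. Qed.
Lemma A_pspace h : A h -> pspace Th h. Proof. by case: A_max => _ + _ _; apply. Qed.
Lemma A_abelian h h' : A h -> A h' -> br h h' = 0.
Proof. by case: A_max => _ _ + _; apply. Qed.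

Lemma centralizer_pspace_in_A z :
  pspace Th z -> (forall h, A h -> br h z = 0) -> A z.
Proof.
move=> zTh zc; case: A_max => _ _ _.
move=> /(_ (fun w => exists h t, A h /\ w = h + t *: z)); apply; last 1 first.
- by exists 0, 1; rewrite add0r scale1r; split=> //; apply: subspace0 A_subspace.
- split; first by exists 0, 0; rewrite scale0r addr0; split=> //; apply: subspace0 A_subspace.
  move=> a _ _ [h1 [t1 [Ah1 ->]]] [h2 [t2 [Ah2 ->]]].
  exists (a *: h1 + h2), (a * t1 + t2); split; first by case: A_subspace => _; apply.
  by rewrite scalerDl scalerDr -scalerA addrACA.
- move=> _ [h [t [Ah ->]]].
  by rewrite /pspace mulmxDl -scalemxAl zTh (A_pspace Ah) scalerN opprD.
- move=> _ _ [h1 [t1 [Ah1 ->]]] [h2 [t2 [Ah2 ->]]].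
  rewrite brDl !brDr !brZl !brZr (A_abelian Ah1 Ah2) (zc _ Ah1) brxx.
  by rewrite (br_anticomm z) (zc _ Ah2) oppr0 !scaler0 !addr0.
- by move=> x Ax; exists x, 0; rewrite scale0r addr0.
Qed.

Lemma A_joint_eigenbasis : exists2 P : 'M[R]_n, P \in unitmx &
  forall j h, A h -> exists mu, br h (row j P) = mu *: row j P.
Proof.
have [k [M [AM MA]]] := rowspace_cover A.
have [P Pu /allP Pdiag] : codiagonalizable [seq ad_mx br (row i M) | i <- enum 'I_k].
  apply/codiagonalizableP; split=> [_ _ /mapP[i _ ->] /mapP[j _ ->]|_ /mapP[i _ ->]].
    apply/eqP; rewrite eq_sym -subr_eq0 -ad_mx_br A_abelian //.
    by apply/eqP; apply: row_mx_ext => v; rewrite ad_mxE br0l mulmx0.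
  exact/ad_pspace_diagonalizable/A_pspace.
exists P => // j h /MA/submxP[c ->].
have eigen i : exists mu, br (row i M) (row j P) = mu *: row j P.
  have /similar_diagPex[D /(similarP Pu) PMP] := Pdiag _ (map_f _ (mem_enum _ i)).
  exists (D 0 j); have := congr1 (row j) PMP.
  by rewrite row_mul ad_mxE mul_diag_mx => ->; apply/rowP => l; rewrite !mxE.
rewrite mulmx_sum_row br_suml.
have sE : subspace (fun v => exists mu, v = mu *: row j P).
  split; first by exists 0; rewrite scale0r.
  by move=> a _ _ [mx ->] [my ->]; exists (a * mx + my); rewrite scalerDl scalerA.
by have [mu ->] := subspace_sum (fun i => c 0 i) sE eigen; exists mu.
Qed.

Lemma fvalN (lam : 'cV[R]_n) h : fval (- lam) h = - fval lam h.
Proof. by rewrite /fval mulmxN mxE. Qed.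

Lemma root_vec_cartan lam x : root_vec br A lam x -> root_vec br A (- lam) (x *m Th).
Proof.
move=> rx h Ah.
by rewrite (br_pspace_cartan _ (A_pspace Ah)) rx // fvalN -scalemxAl scaleNr.
Qed.

Lemma br_cartan_root_in_A lam x : root_vec br A lam x -> A (br (x *m Th) x).
Proof.
move=> rx; apply: centralizer_pspace_in_A.
  by rewrite /pspace -br_cartan cartanK br_anticomm.
move=> h Ah; have := br_jacobi h (x *m Th) x.
rewrite (br_anticomm x h) brNr (rx _ Ah) brZr (br_anticomm (x *m Th)).
by rewrite (root_vec_cartan rx Ah) brZr fvalN scalerN opprK scaleNr addrK.
Qed.

(* With t = [Theta x, x] in a, K(h', t) = - lam(h') K(Theta x, x) for h' in a.
   If lam(t) = 0 then K(t, t) = 0, so t = 0 by positivity of B on p, and then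
   lam vanishes on a. *)
Lemma root_br_cartan_neq0 lam x h : x != 0 -> root_vec br A lam x ->
  A h -> fval lam h != 0 -> fval lam (br (x *m Th) x) != 0.
Proof.
move=> x0 rx Ah lh0; have At := br_cartan_root_in_A rx.
set t := br (x *m Th) x in At *.
have Kx0 : K (x *m Th) x != 0.
  rewrite killingC; apply: contraTneq (cartan_form_gt0 x0).
  by rewrite /cartan_form => ->; rewrite oppr0 ltxx.
have Kt h' : A h' -> K h' t = - (fval lam h' * K (x *m Th) x).
  by move=> Ah'; rewrite /t -killing_invariant (root_vec_cartan rx Ah') killingZl fvalN mulNr.
apply: contraTneq lh0 => lt0; rewrite negbK.
have t0 : t = 0.
  apply: contraTeq isT => /cartan_form_gt0; rewrite /cartan_form (A_pspace At).
  by rewrite killingC killingNl opprK Kt // lt0 mul0r oppr0 ltxx.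
move: (Kt _ Ah); rewrite t0 killingC killing0l => /esym/eqP.
by rewrite oppr_eq0 mulf_eq0 (negPf Kx0) orbF.
Qed.

Lemma joint_eigenvector_root_vec x : x != 0 ->
  (forall h, A h -> exists mu, br h x = mu *: x) -> exists lam, root_vec br A lam x.
Proof.
move=> x0 xeigen; have [k xk] : exists k, x 0 k != 0.
  have [k|x_eq0] := pickP (fun k => x 0 k != 0); first by exists k.
  by case/negP: x0; apply/eqP/rowP => k; rewrite mxE; apply/eqP/negbFE/x_eq0.
set lam := \col_i (br (delta_mx 0 i) x 0 k / x 0 k); exists lam => h Ah.
have [mu brhx] := xeigen h Ah; suff -> : fval lam h = mu by [].
have -> : mu = br h x 0 k / x 0 k by rewrite brhx mxE mulfK.
rewrite /fval mxE {2}(row_sum_delta h) br_suml summxE mulr_suml.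
by apply: eq_bigr => i _; rewrite !mxE mulrA.
Qed.

Lemma centralizer_A_decomp x : (forall h, A h -> br h x = 0) ->
  exists h y, [/\ A h, mspace br Th A y & x = h + y].
Proof.
move=> xc; exists (2^-1 *: (x - x *m Th)), (2^-1 *: (x + x *m Th)); split.
- apply: centralizer_pspace_in_A => [|h Ah].
    by rewrite /pspace -scalemxAl mulmxBl cartanK -scalerN opprB.
  by rewrite brZr brBr (br_pspace_cartan _ (A_pspace Ah)) xc // mul0mx oppr0 subr0 scaler0.
- split=> [|h Ah]; first by rewrite -scalemxAl mulmxDl cartanK addrC.
  by rewrite brZr brDr (br_pspace_cartan _ (A_pspace Ah)) xc // mul0mx oppr0 addr0 scaler0.
- by rewrite -scalerDr addrACA addNr addr0 -mulr2n -scaler_nat scalerA mulVf ?scale1r ?pnatr_eq0.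
Qed.

Lemma mspace0 : mspace br Th A 0.
Proof. by split=> [|h _]; rewrite ?mul0mx ?br0r. Qed.

Variable H0 : L.
Hypothesis H0_regular : regular_elt br A H0.
Variables (m : nat) (pi : L -> 'M[R]_m).
Hypothesis pi_rep : is_lie_rep br pi.

Let pi_linear a x y : pi (a *: x + y) = a *: pi x + pi y.
Proof. by case: pi_rep. Qed.

Lemma pi_br x y : pi (br x y) = pi x *m pi y - pi y *m pi x.
Proof. by case: pi_rep. Qed.

Lemma pi0 : pi 0 = 0.
Proof.
have := pi_linear 1 0 0; rewrite scaler0 addr0 scale1r => e.
by apply: (addrI (pi 0)); rewrite addr0 -e.
Qed.

Lemma piZ a x : pi (a *: x) = a *: pi x.
Proof. by rewrite -[a *: x]addr0 pi_linear pi0 addr0. Qed.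

Lemma pi_sum k (c : 'I_k -> R) (w : 'I_k -> L) :
  pi (\sum_(i < k) c i *: w i) = \sum_(i < k) c i *: pi (w i).
Proof. by elim/big_rec2: _ => [|i y x _ <-]; rewrite ?pi0 // pi_linear. Qed.

Local Notation ams := (ams_plus br Th A H0).
Let W := lspan (fun w : 'cV[R]_m => exists X v, ams X /\ w = pi X *m v).

Let W_image X v : ams X -> W (pi X *m v).
Proof. by move=> aX; apply: lspan_gen; exists X, v. Qed.

Lemma ams_A h : A h -> ams h.
Proof.
move=> Ah; exists h, 0, 0; split; rewrite ?addr0 //; first exact: mspace0.
exact: subspace0 (lspan_subspace _).
Qed.

Lemma ams_pos_root_vec lam x : x != 0 -> root_vec br A lam x -> 0 < fval lam H0 -> ams x.
Proof.
move=> x0 rx lH0; exists 0, 0, x; split; rewrite ?add0r //.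
- exact: subspace0 A_subspace.
- exact: mspace0.
apply: lspan_gen; exists lam; split=> //; split; last by exists x.
by exists H0; split; [case: H0_regular | rewrite gt_eqF].
Qed.

Lemma image_neg_root_vec lam x v : x != 0 -> root_vec br A lam x ->
  fval lam H0 < 0 -> W (pi x *m v).
Proof.
move=> x0 rx lH0; have AH0 : A H0 by case: H0_regular.
have At := br_cartan_root_in_A rx.
apply: (@sl2_image _ _ (pi (x *m Th)) _ (pi (br (x *m Th) x)) (fval lam (br (x *m Th) x))).
- by apply: root_br_cartan_neq0 x0 rx AH0 _; rewrite lt_eqF.
- by rewrite pi_br.
- by rewrite -pi_br rx // piZ.
- exact: lspan_subspace.
- move=> u; apply/W_image/(ams_pos_root_vec _ (root_vec_cartan rx)).
    by apply: contraNneq x0 => x0; rewrite -(cartanK x) x0 mul0mx.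
  by rewrite fvalN oppr_gt0.
- by move=> u; apply/W_image/ams_A.
Qed.

Lemma image_root_vec lam x v : x != 0 -> root_vec br A lam x -> W (pi x *m v).
Proof.
move=> x0 rx.
have [[h [Ah lh]]|lam_A0] := pselect (exists h, A h /\ fval lam h != 0).
  have lH0 : fval lam H0 != 0 by case: H0_regular => _; apply; split; [exists h | exists x].
  have [lH0_lt0|lH0_gt0|lH0_eq0] := ltgtP (fval lam H0) 0.
  - exact: image_neg_root_vec lH0_lt0.
  - exact/W_image/(ams_pos_root_vec x0 rx).
  - by rewrite lH0_eq0 eqxx in lH0.
have xc h : A h -> br h x = 0.
  move=> Ah; rewrite rx //; suff /eqP -> : fval lam h == 0 by rewrite scale0r.
  by apply: contra_notT lam_A0 => lh; exists h.
have [h [y [Ah my ->]]] := centralizer_A_decomp xc.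
apply: W_image; exists h, y, 0; rewrite addr0; split=> //.
exact: subspace0 (lspan_subspace _).
Qed.

Lemma image_in_ams_span X v : W (pi X *m v).
Proof.
have [P Pu Peigen] := A_joint_eigenbasis.
rewrite -[X](mulmxKV Pu) mulmx_sum_row pi_sum mulmx_suml.
under eq_bigr do rewrite -scalemxAl.
apply: subspace_sum (lspan_subspace _) _ => j.
have [->|Pj0] := eqVneq (row j P) 0.
  by rewrite pi0 mul0mx; apply: subspace0 (lspan_subspace _).
have [lam rl] := joint_eigenvector_root_vec Pj0 (Peigen j).
exact: image_root_vec rl.
Qed.

End LieAlgebra.

Unset Implicit Arguments.

Theorem lemma2p7 (R : realType) (n : nat) (br : 'rV[R]_n -> 'rV[R]_n -> 'rV[R]_n)
  (Th : 'M[R]_n) (A : 'rV[R]_n -> Prop) (H0 : 'rV[R]_n)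
  (m : nat) (pi : 'rV[R]_n -> 'M[R]_m) :
  is_lie_bracket br -> semisimple br -> no_compact_ideals br ->
  cartan_involution br Th -> max_abelian_in_p br Th A ->
  regular_elt br A H0 -> is_lie_rep br pi ->
  forall u : 'cV[R]_m,
    lspan (fun w : 'cV[R]_m => exists X v, w = pi X *m v) u <->
    lspan (fun w : 'cV[R]_m => exists X v, ams_plus br Th A H0 X /\ w = pi X *m v) u.
Proof.
move=> br_lie _ _ Th_cartan A_max H0_regular pi_rep u; split.
  apply: lspan_min (lspan_subspace _) _ u => _ [X [v ->]].
  exact: image_in_ams_span.
apply: lspan_min (lspan_subspace _) _ u => _ [X [v [_ ->]]].
by apply: lspan_gen; exists X, v.
Qed.
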